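(* Let $M=[a_{ij},b_{ij}]_{i=1,\dots,n;\,j=1,\dots,m}$ and $\widehat M=[\hat a_{ij},\hat b_{ij}]_{i=1,\dots,n;\,j=1,\dots,m}$ be 2-person normal form game matrices of dimensions $n\times m$, and put $c_{ij}=\hat a_{ij}-a_{ij}$, $d_{ij}=\hat b_{ij}-b_{ij}$. Then $\widehat M$ can be obtained from $M$ by an OI-transformation if and only if both (C1) $a_{ij}+b_{ij}=\hat a_{ij}+\hat b_{ij}$ (equivalently $d_{ij}=-c_{ij}$) for all $i\le n$, $j\le m$; and (C2) $c_{ij}+c_{(i+1)(j+1)}=c_{i(j+1)}+c_{(i+1)j}$ for all $i\le n-1$, $j\le m-1$.
   Context: A 2-person normal form game matrix of dimensions $n\times m$ is $M=[a_{ij},b_{ij}]_{i\le n,\,j\le m}$, where $(a_{ij},b_{ij})\in\mathbb{R}^2$ are the payoffs of the row player $A$ and column player $B$ when $A$ plays strategy $A_i$ and $B$ plays $B_j$. A preplay offer by $A$ to $B$ of amount $\delta\ge 0$ contingent on $B_j$ replaces $(a_{ij},b_{ij})$ by $(a_{ij}-\delta,b_{ij}+\delta)$ for every $i$ (other entries unchanged); a preplay offer by $B$ to $A$ of amount $\delta\ge0$ contingent on $A_i$ replaces $(a_{ij},b_{ij})$ by $(a_{ij}+\delta,b_{ij}-\delta)$ for every $j$. Each such map is a POI-transformation; an OI-transformation is a composition of finitely many POI-transformations (all amounts non-negative). $\widehat M$ ''can be obtained from $M$ by an OI-transformation'' means $\widehat M=\tau(M)$ for some OI-transformation $\tau$.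 *)

From HB Require Import structures.
From mathcomp Require Import all_boot all_order all_algebra.
Set Implicit Arguments. Unset Strict Implicit. Unset Printing Implicit Defensive.
Import Order.TTheory GRing.Theory Num.Theory.
Local Open Scope ring_scope.

(* A 2-person normal form game matrix of dimensions n x m:
   the pair (A, B) of payoff matrices of the row player A and column player B;
   entry (i,j) of the game is (A i j, B i j). Indices are 0-based. *)
Definition game (R : realFieldType) (n m : nat) : Type :=
  ('M[R]_(n, m) * 'M[R]_(n, m))%type.

(* A preplay offer: either by A to B contingent on column j, or by B to A
   contingent on row i, with an amount delta. *)
Inductive offer (R : realFieldType) (n m : nat) : Type :=
  | OfferA : 'I_m -> R -> offer R n m
  | OfferB : 'I_n -> R -> offer R n m.

Definition offer_amount (R : realFieldType) (n m : nat) (o : offer R n m) : R :=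
  match o with OfferA _ d => d | OfferB _ d => d end.

Definition poi (R : realFieldType) (n m : nat) (o : offer R n m)
    (M : game R n m) : game R n m :=
  match o with
  | OfferA j d =>
      (\matrix_(i < n, k < m) (if k == j then M.1 i k - d else M.1 i k),
       \matrix_(i < n, k < m) (if k == j then M.2 i k + d else M.2 i k))
  | OfferB i d =>
      (\matrix_(l < n, k < m) (if l == i then M.1 l k + d else M.1 l k),
       \matrix_(l < n, k < m) (if l == i then M.2 l k - d else M.2 l k))
  end.

(* An OI-transformation: a finite composition of POI-transformations with
   non-negative amounts, represented by the list of its offers
   (applied from the last element of the list to the first). *)
Definition oi_apply (R : realFieldType) (n m : nat) (s : seq (offer R n m))
    (M : game R n m) : game R n m :=
  foldr (@poi R n m) M s.

Definition oi_obtainable (R : realFieldType) (n m : nat)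
    (M Mhat : game R n m) : Prop :=
  exists s : seq (offer R n m),
    (forall k : nat, (k < size s)%N ->
       forall o0, 0 <= offer_amount (nth o0 s k)) /\ Mhat = oi_apply s M.

From HB Require Import structures.
From mathcomp Require Import all_boot all_order all_algebra.
From mathcomp Require Import lra.
Set Implicit Arguments. Unset Strict Implicit. Unset Printing Implicit Defensive.
Import Order.TTheory GRing.Theory Num.Theory.
Local Open Scope ring_scope.

(* Every preplay offer moves some amount from one player to the other on a
   whole column (offer by A) or a whole row (offer by B).  Recording the
   amount [transfer o i j] received by the row player at entry (i, j), an
   OI-transformation adds the sum of these transfers to A's payoffs and
   subtracts it from B's ([oi_apply_fst], [oi_apply_snd]).  Hence the sum of
   payoffs is invariant (C1), and the increment c = Mhat.1 - M.1 is of the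
   separable form c i j = u i + v j, which satisfies the rectangle rule (C2).

   Conversely, the rectangle rule on adjacent entries forces c to be
   separable ([grid_separable], [rectangle_rule_separable]); and a separable
   increment is realised by a row offer of amount u i + t for every row and a
   column offer of amount t - v j for every column, where the shift t is
   chosen large enough to make all amounts non-negative
   ([separable_obtainable]). *)

Section Transfers.
Variables (R : realFieldType) (n m : nat).

Definition transfer (o : offer R n m) (i : 'I_n) (k : 'I_m) : R :=
  match o with
  | OfferA j d => if k == j then - d else 0
  | OfferB l d => if i == l then d else 0
  end.

Lemma transfer_rectangle (o : offer R n m) (i i' : 'I_n) (j j' : 'I_m) :
  transfer o i j + transfer o i' j' = transfer o i j' + transfer o i' j.
Proof. by case: o => [k d|l d] /=; rewrite addrC. Qed.

Lemma oi_apply_fst (s : seq (offer R n m)) (M : game R n m) i k :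
  (oi_apply s M).1 i k = M.1 i k + \sum_(o <- s) transfer o i k.
Proof.
elim: s => [|o s IH]; first by rewrite big_nil addr0.
rewrite big_cons /=; case: o => [j d|l d]; rewrite /= mxE IH;
  case: eqP => _ /=; lra.
Qed.

Lemma oi_apply_snd (s : seq (offer R n m)) (M : game R n m) i k :
  (oi_apply s M).2 i k = M.2 i k - \sum_(o <- s) transfer o i k.
Proof.
elim: s => [|o s IH]; first by rewrite big_nil subr0.
rewrite big_cons /=; case: o => [j d|l d]; rewrite /= mxE IH;
  case: eqP => _ /=; lra.
Qed.

Lemma norm_le_sum_norm (I : finType) (F : I -> R) (i : I) :
  `|F i| <= \sum_k `|F k|.
Proof.
rewrite (bigD1 i) //= lerDl; exact: sumr_ge0.
Qed.

Lemma separable_obtainable (M Mhat : game R n m) (u : 'I_n -> R)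
    (v : 'I_m -> R) :
  (forall i j, Mhat.1 i j = M.1 i j + (u i + v j)) ->
  (forall i j, M.1 i j + M.2 i j = Mhat.1 i j + Mhat.2 i j) ->
  oi_obtainable M Mhat.
Proof.
move=> Hsep Hsum.
pose t := \sum_i `|u i| + \sum_j `|v j|.
have sum_u_ge0 : 0 <= \sum_i `|u i| by apply: sumr_ge0 => i _.
have sum_v_ge0 : 0 <= \sum_j `|v j| by apply: sumr_ge0 => j _.
have u_ge : forall i, - u i <= t.
  move=> i; have := norm_le_sum_norm u i; have := ler_norm (- u i).
  rewrite normrN /t; lra.
have v_le : forall j, v j <= t.
  move=> j; have := norm_le_sum_norm v j; have := ler_norm (v j).
  rewrite /t; lra.
pose s := [seq OfferB m i (u i + t) | i <- enum 'I_n] ++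
          [seq OfferA n j (t - v j) | j <- enum 'I_m].
have s_transfer : forall i j, \sum_(o <- s) transfer o i j = u i + v j.
  move=> i j; rewrite big_cat !big_map /=.
  rewrite (bigD1 i) //= eqxx big1 => [|l /negbTE Hl]; last by rewrite eq_sym Hl.
  rewrite (bigD1 j) //= eqxx big1 => [|l /negbTE Hl]; last by rewrite eq_sym Hl.
  lra.
exists s; split.
  have s_nonneg : all (fun o => 0 <= offer_amount o) s.
    rewrite all_cat !all_map; apply/andP; split; apply/allP => k _ /=.
      by have := u_ge k; lra.
    by have := v_le k; lra.
  by move=> k Hk o0; exact: (all_nthP o0 s_nonneg).
apply: injective_projections; apply/matrixP => i j.
  by rewrite oi_apply_fst s_transfer Hsep.
rewrite oi_apply_snd s_transfer; have := Hsum i j; rewrite Hsep; lra.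
Qed.

End Transfers.

Section Grid.
Variable R : realFieldType.

Lemma grid_row_difference (c : nat -> nat -> R) (n m : nat) :
  (forall a b, (a < n)%N -> (b < m)%N ->
     c a b + c a.+1 b.+1 = c a b.+1 + c a.+1 b) ->
  forall a b, (a < n)%N -> (b <= m)%N ->
    c a.+1 b - c a b = c a.+1 0%N - c a 0%N.
Proof.
move=> Hsq a b Ha; elim: b => [//|b IH] Hb.
have := IH (ltnW Hb); have := Hsq a b Ha Hb; lra.
Qed.

Lemma grid_separable (c : nat -> nat -> R) (n m : nat) :
  (forall a b, (a < n)%N -> (b < m)%N ->
     c a b + c a.+1 b.+1 = c a b.+1 + c a.+1 b) ->
  forall a b, (a <= n)%N -> (b <= m)%N ->
    c a b = c a 0%N + c 0%N b - c 0%N 0%N.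
Proof.
move=> Hsq a b; elim: a => [|a IH] Ha Hb; first lra.
have := IH (ltnW Ha) Hb; have := grid_row_difference Hsq Ha Hb; lra.
Qed.

Lemma rectangle_rule_separable (n m : nat) (c : 'I_n -> 'I_m -> R) :
  (forall (i i' : 'I_n) (j j' : 'I_m), val i' = (val i).+1 ->
     val j' = (val j).+1 -> c i j + c i' j' = c i j' + c i' j) ->
  exists (u : 'I_n -> R) (v : 'I_m -> R), forall i j, c i j = u i + v j.
Proof.
case: n c => [|n] c; first by exists (fun _ => 0), (fun _ => 0); case.
case: m c => [|m] c Hrect; first by exists (fun _ => 0), (fun _ => 0) => i [].
pose g a b := c (inord a) (inord b).
have Hsq : forall a b, (a < n)%N -> (b < m)%N ->
    g a b + g a.+1 b.+1 = g a b.+1 + g a.+1 b.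
  move=> a b Ha Hb; apply: Hrect; rewrite /= !inordK ?ltnS //; exact: ltnW.
exists (fun i => c i ord0), (fun j => c ord0 j - c ord0 ord0) => i j.
have row0 : inord 0 = ord0 :> 'I_n.+1 by apply: val_inj; rewrite /= inordK.
have col0 : inord 0 = ord0 :> 'I_m.+1 by apply: val_inj; rewrite /= inordK.
have := grid_separable Hsq (ltn_ord i : (i <= n)%N) (ltn_ord j : (j <= m)%N).
rewrite /g !inord_val row0 col0 => ->; lra.
Qed.

End Grid.

Theorem theorem1 (R : realFieldType) (n m : nat) (M Mhat : game R n m) :
  oi_obtainable M Mhat <->
  ((forall (i : 'I_n) (j : 'I_m),
      M.1 i j + M.2 i j = Mhat.1 i j + Mhat.2 i j) /\
   (forall (i i' : 'I_n) (j j' : 'I_m),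
      val i' = (val i).+1 -> val j' = (val j).+1 ->
      (Mhat.1 i j - M.1 i j) + (Mhat.1 i' j' - M.1 i' j')
      = (Mhat.1 i j' - M.1 i j') + (Mhat.1 i' j - M.1 i' j))).
Proof.
split.
  case=> s [_ ->]; split=> [i j|i i' j j' _ _].
    rewrite oi_apply_fst oi_apply_snd; lra.
  have increment : forall i j, (oi_apply s M).1 i j - M.1 i j
                                = \sum_(o <- s) transfer o i j.
    by move=> {}i {}j; rewrite oi_apply_fst addrC addKr.
  rewrite !increment -!big_split.
  by apply: eq_bigr => o _; exact: transfer_rectangle.
case=> Hsum Hrect.
have [u [v Hsep]] := rectangle_rule_separable Hrect.
apply: (separable_obtainable (u := u) (v := v)) => // i j.
by rewrite -Hsep addrC subrK.
Qed.
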